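(* Let $1<\beta\le2$ and set $\mathrm{ei}_\beta(y)=\mathrm{cpr}_\beta(y)-\tfrac12$ for $y\in[0,1]$. Then for all $0\le y<\beta/2$, $$[\mathcal P_\beta\,\mathrm{ei}_\beta](y)=\frac1\beta\,\mathrm{ei}_\beta(y).$$
   Context: $T_\beta(x)=\beta x$ for $0\le x<\tfrac12$, $T_\beta(x)=\beta(x-\tfrac12)$ for $\tfrac12\le x\le1$; $k_n(x)=0$ if $T_\beta^n(x)<\tfrac12$ and $1$ otherwise; $\mathrm{cpr}_\beta(y)=\sum_{n\ge0}k_n(y)2^{-n-1}$. For a function $f$ on $[0,1]$, the operator $\mathcal P_\beta$ is $[\mathcal P_\beta f](y)=\frac1\beta\left[f\!\left(\frac y\beta\right)+f\!\left(\frac y\beta+\frac12\right)\right]$, $0\le y\le\beta/2$. *)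

From Stdlib Require Import Reals Lra ClassicalEpsilon.
Open Scope R_scope.

Definition T (beta x : R) : R :=
  if Rlt_dec x (1/2) then beta * x else beta * (x - 1/2).

Fixpoint Titer (beta : R) (n : nat) (x : R) : R :=
  match n with
  | O => x
  | S m => T beta (Titer beta m x)
  end.

Definition kdig (beta : R) (n : nat) (x : R) : R :=
  if Rlt_dec (Titer beta n x) (1/2) then 0 else 1.

(* the value of a convergent series (chosen classically; default 0) *)
Definition series_value (f : nat -> R) : R :=
  match excluded_middle_informative (exists l, infinite_sum f l) with
  | left H => proj1_sig (constructive_indefinite_description _ H)
  | right _ => 0
  end.

Definition cpr (beta y : R) : R :=
  series_value (fun n => kdig beta n y / 2 ^ (S n)).

Definition ei (beta y : R) : R := cpr beta y - 1/2.

Definition Pop (beta : R) (f : R -> R) (y : R) : R :=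
  / beta * (f (y / beta) + f (y / beta + 1/2)).

(* Every point [x] with [T x = y] has binary expansion [k_0(x)] followed by the
   expansion of [y], so [cpr x = k_0(x)/2 + cpr y / 2].  For [0 <= y < beta/2]
   the two points [y/beta] and [y/beta + 1/2] both map to [y], with first digits
   [0] and [1]; hence [ei(y/beta) + ei(y/beta + 1/2) = cpr y - 1/2 = ei y]. *)

From Stdlib Require Import Reals Lra ClassicalEpsilon.
Open Scope R_scope.

Lemma series_value_eq (f : nat -> R) (l : R) :
  infinite_sum f l -> series_value f = l.
Proof.
  intros Hl. unfold series_value.
  destruct excluded_middle_informative as [Hex | Hnex].
  - destruct constructive_indefinite_description as [l' Hl']; simpl.
    exact (UL_sequence _ _ _ Hl' Hl).
  - exfalso. apply Hnex. exists l. exact Hl.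
Qed.

Lemma Un_cv_const (c : R) : Un_cv (fun _ => c) c.
Proof.
  intros eps Heps. exists 0%nat. intros n _.
  unfold Rdist. rewrite Rminus_diag, Rabs_R0. lra.
Qed.

Lemma infinite_sum_cons_half (a u : nat -> R) (c l : R) :
  u 0%nat = c -> (forall n, u (S n) = a n / 2) ->
  infinite_sum a l -> infinite_sum u (c + l / 2).
Proof.
  intros Hu0 HuS Hl.
  assert (Hpartial : forall n, sum_f_R0 u (S n) = c + sum_f_R0 a n * / 2).
  { induction n as [|n IH].
    - simpl. rewrite Hu0, HuS. unfold Rdiv. ring.
    - rewrite tech5, IH, tech5, HuS. unfold Rdiv. ring. }
  apply (CV_shift _ 1).
  apply (Un_cv_ext (fun n => c + sum_f_R0 a n * / 2)).
  { intros n. rewrite Nat.add_1_r. symmetry. apply Hpartial. }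
  apply CV_plus; [apply Un_cv_const|].
  apply CV_mult; [exact Hl | apply Un_cv_const].
Qed.

Lemma kdig_bounds (beta : R) (n : nat) (x : R) : 0 <= kdig beta n x <= 1.
Proof. unfold kdig. destruct Rlt_dec; lra. Qed.

Lemma kdig_series_cv (beta x : R) :
  exists l, infinite_sum (fun n => kdig beta n x / 2 ^ S n) l.
Proof.
  assert (Hgeom : Pser (fun _ => 1) (1/2) (/ (1 - 1/2))).
  { apply GP_infinite. rewrite Rabs_right; lra. }
  destruct (Rseries_CV_comp (fun n => kdig beta n x / 2 ^ S n)
              (fun n => 1 * (1/2) ^ n)) as [l Hl].
  - intros n.
    assert (Hpow : 0 < 2 ^ n) by (apply pow_lt; lra).
    pose proof (kdig_bounds beta n x).
    rewrite Rmult_1_l, Rdiv_1_l, pow_inv. simpl.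
    assert (Hinv : 0 < / (2 * 2 ^ n)) by (apply Rinv_0_lt_compat; lra).
    replace (/ 2 ^ n) with (2 * / (2 * 2 ^ n)) by (field; lra).
    unfold Rdiv. split; nra.
  - exists (/ (1 - 1/2)). exact Hgeom.
  - exists l. exact Hl.
Qed.

Lemma Titer_S (beta : R) (n : nat) (x : R) :
  Titer beta (S n) x = Titer beta n (T beta x).
Proof.
  induction n as [|n IH]; [reflexivity|].
  change (T beta (Titer beta (S n) x) = T beta (Titer beta n (T beta x))).
  rewrite IH. reflexivity.
Qed.

Lemma cpr_T (beta x : R) :
  cpr beta x = kdig beta 0 x / 2 + cpr beta (T beta x) / 2.
Proof.
  destruct (kdig_series_cv beta (T beta x)) as [l Hl].
  unfold cpr at 2. rewrite (series_value_eq _ _ Hl).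
  apply series_value_eq.
  apply (infinite_sum_cons_half (fun n => kdig beta n (T beta x) / 2 ^ S n));
    [| | exact Hl].
  - cbv beta. rewrite pow_1. reflexivity.
  - intros n. unfold kdig. rewrite Titer_S. simpl. field.
    apply pow_nonzero. lra.
Qed.

Section Preimages.

Variables beta y : R.
Hypothesis beta_pos : 0 < beta.
Hypothesis y_ge0 : 0 <= y.

Lemma T_left_preimage : y < beta / 2 -> T beta (y / beta) = y.
Proof.
  intros Hy. unfold T. destruct Rlt_dec as [_ | Hge].
  - field. lra.
  - exfalso. apply Hge.
    apply (Rmult_lt_reg_l beta); [lra|]. field_simplify; lra.
Qed.

Lemma kdig0_left_preimage : y < beta / 2 -> kdig beta 0 (y / beta) = 0.
Proof.
  intros Hy. unfold kdig. simpl. destruct Rlt_dec as [_ | Hge]; [reflexivity|].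
  exfalso. apply Hge.
  apply (Rmult_lt_reg_l beta); [lra|]. field_simplify; lra.
Qed.

Lemma y_div_beta_ge0 : 0 <= y / beta.
Proof. apply Rmult_le_pos; [lra | apply Rlt_le, Rinv_0_lt_compat, beta_pos]. Qed.

Lemma T_right_preimage : T beta (y / beta + 1/2) = y.
Proof.
  pose proof y_div_beta_ge0. unfold T.
  destruct Rlt_dec; [lra|]. field. lra.
Qed.

Lemma kdig0_right_preimage : kdig beta 0 (y / beta + 1/2) = 1.
Proof.
  pose proof y_div_beta_ge0. unfold kdig. simpl.
  destruct Rlt_dec; [lra | reflexivity].
Qed.

End Preimages.

Theorem mainTheorem6 (beta y : R) (hb1 : 1 < beta) (hb2 : beta <= 2)
  (hy0 : 0 <= y) (hy1 : y < beta / 2) :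
  Pop beta (ei beta) y = / beta * ei beta y.
Proof.
  assert (beta_pos : 0 < beta) by lra.
  unfold Pop, ei.
  rewrite (cpr_T beta (y / beta)), (cpr_T beta (y / beta + 1/2)),
    T_left_preimage, kdig0_left_preimage, T_right_preimage, kdig0_right_preimage
    by assumption.
  field. lra.
Qed.
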